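(* Let $N\ge 2$, $1\le r<N$, and consider a single reversible reaction with stoichiometric vector $\sigma=(\sigma_1,\dots,\sigma_N)^{\rm T}=(-\alpha_1,\dots,-\alpha_r,\beta_{r+1},\dots,\beta_N)^{\rm T}$, where $\alpha_i>0$ for $i\le r$ and $\beta_i>0$ for $i>r$. Let $U_1,\dots,U_N\in\mathbb{R}$, $k_1^->0$, $\Delta t>0$. Let $c^0\in\mathbb{R}^N$ with $c^0_i>0$ for all $i$, set $c(R)=c^0+\sigma R$ for $R\in\mathbb{R}$, and let $R^n=0$. Let $\widehat R^{n+1}\in\mathbb{R}$ be any number with $c_i(\widehat R^{n+1})>0$ for all $i$ (for instance the solution of the first-order predictor scheme described in the context), put $\widehat R^{n+1/2}=\tfrac12(R^n+\widehat R^{n+1})$ and $\hat\eta=\eta(c(\widehat R^{n+1/2}))$. Then there exists a unique $R^{n+1}\in\mathbb{R}$ such that $c_i(R^{n+1})>0$ for all $i$, $R^{n+1}-R^n+\hat\eta\,\Delta t>0$, and $$\ln\Big(\frac{R^{n+1}-R^n}{\hat\eta\,\Delta t}+1\Big)=-\mu_R^{n+1/2},\qquad \mu_R^{n+1/2}=\phi(R^{n+1},R^n)+\Delta t\sum_{i=1}^N\sigma_i\big(\mu_i(R^{n+1})-\mu_i(R^n)\big).$$ Moreover, $R^{n+1}$ is the unique minimizer over $\{R: c_i(R)>0\ \forall i,\ R-R^n+\hat\eta\Delta t>0\}$ of the strictly convex function $$J_n(R)=(R-R^n+\hat\eta\Delta t)\ln\Big(\frac{R-R^n}{\hat\eta\Delta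 t}+1\Big)-(R-R^n)+\int_{R^n}^R\phi(s,R^n)\,ds+\Delta t\,F(R)-\gamma^n R,$$ where $\gamma^n=\Delta t\sum_{i=1}^N\sigma_i\mu_i(R^n)$.
   Context: For $R$ with $c_i(R)>0$ for all $i$, define the (pointwise) free energy $F(R)=\sum_{i=1}^N\big[c_i(R)(\ln c_i(R)-1)+c_i(R)U_i\big]$, the chemical potentials $\mu_i(R)=\ln c_i(R)+U_i$ (so $F'(R)=\sum_i\sigma_i\mu_i(R)$), and the mobility $\eta(c)=k_1^-\prod_{i=r+1}^N c_i^{\beta_i}$ for $c$ with positive components. The discrete variational derivative is $\phi(p,q)=\frac{F(p)-F(q)}{p-q}$ if $p\neq q$ and $\phi(p,p)=F'(p)$. A first-order predictor $\widehat R^{n+1}$ may be obtained by solving $\ln\big(\frac{\widehat R^{n+1}-R^n}{\eta(c(R^n))\Delta t}+1\big)=-\sum_{i=1}^N\sigma_i\mu_i(\widehat R^{n+1})$ with $c(\widehat R^{n+1})$ componentwise positive. *)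

From Stdlib Require Import Reals Lra Lia Arith.
From Coquelicot Require Import Coquelicot.
Open Scope R_scope.

(* Species are indexed 0-based: i = 0..N-1.  Reactants are i < r, products r <= i < N. *)

Fixpoint sum_from (m k : nat) (f : nat -> R) : R :=
  match k with
  | O => 0
  | S k' => f m + sum_from (S m) k' f
  end.

Fixpoint prod_from (m k : nat) (f : nat -> R) : R :=
  match k with
  | O => 1
  | S k' => f m * prod_from (S m) k' f
  end.

(* \sum_{i=1}^N in the paper, i.e. 0 <= i < N here *)
Definition sumN (N : nat) (f : nat -> R) : R := sum_from 0 N f.

Definition stoich (r : nat) (alpha beta : nat -> R) (i : nat) : R :=
  if (i <? r)%nat then - alpha i else beta i.

Definition conc (c0 sigma : nat -> R) (x : R) (i : nat) : R := c0 i + sigma i * x.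

Definition Fen (N : nat) (c0 sigma U : nat -> R) (x : R) : R :=
  sumN N (fun i => conc c0 sigma x i * (ln (conc c0 sigma x i) - 1)
                   + conc c0 sigma x i * U i).

Definition chem (c0 sigma U : nat -> R) (x : R) (i : nat) : R :=
  ln (conc c0 sigma x i) + U i.

Definition dFen (N : nat) (c0 sigma U : nat -> R) (x : R) : R :=
  sumN N (fun i => sigma i * chem c0 sigma U x i).

(* mobility eta(c) = k1^- prod_{i=r+1}^N c_i^{beta_i} (0-based: r <= i < N) *)
Definition mobility (N r : nat) (k1m : R) (beta : nat -> R) (c : nat -> R) : R :=
  k1m * prod_from r (N - r) (fun i => Rpower (c i) (beta i)).

Definition phi (N : nat) (c0 sigma U : nat -> R) (p q : R) : R :=
  if Req_EM_T p q then dFen N c0 sigma U p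
  else (Fen N c0 sigma U p - Fen N c0 sigma U q) / (p - q).

Definition strictly_convex_on (D : R -> Prop) (f : R -> R) : Prop :=
  forall x y t, D x -> D y -> x <> y -> 0 < t < 1 ->
    f (t * x + (1 - t) * y) < t * f x + (1 - t) * f y.

From Stdlib Require Import Reals Lra Lia.
From Coquelicot Require Import Coquelicot.
Open Scope R_scope.

(* Write E = eta_hat * dt > 0 and take R^n = 0.  The scheme equation reads
   G(R) = 0 for the residual
     G(R) = ln(R/E + 1) + phi(R, 0) + dt (F'(R) - F'(0)),
   which is the derivative of the energy J_n on the feasible set
   D = { R : c(R) > 0, R + E > 0 }.  Everything follows from one abstract fact
   (convex_potential_minimizer): if D is an interval, J' = G on D and G is
   continuous, strictly increasing and takes both signs on D, then G has exactly
   one zero in D, this zero is the strict minimizer of J on D, and J is strictly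
   convex on D.  The rest of the file checks these hypotheses:
   - phi(., 0) is the difference quotient of F at 0; it is continuous, and
     strictly increasing because F' is (three-chord lemma, section Secant);
   - F' = sum_i sigma_i mu_i is strictly increasing, since each sigma_i mu_i is;
   - G takes both signs because F' tends to +oo (resp. -oo) when the most
     limiting reactant (resp. product) is depleted, and ln(R/E + 1) tends to -oo
     as R decreases to -E.
   The predictor R_hat only enters through eta_hat > 0. *)

Definition interval (D : R -> Prop) : Prop :=
  forall x y z, D x -> D y -> x <= z <= y -> D z.

Section ConvexPotential.

Variables (D : R -> Prop) (J G : R -> R).
Hypothesis D_interval : interval D.
Hypothesis J_derive : forall x, D x -> is_derive J x (G x).
Hypothesis G_increasing : forall x y, D x -> D y -> x < y -> G x < G y.

Lemma potential_mean_value x y : D x -> D y -> x < y ->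
  exists c, D c /\ x < c < y /\ J y - J x = G c * (y - x).
Proof.
  intros Dx Dy xy.
  destruct (MVT_cor2 J G x y xy) as [c [Hmvt Hc]].
  - intros c Hc. apply is_derive_Reals, J_derive, (D_interval x y); auto.
  - exists c. repeat split; try lra. apply (D_interval x y); auto; lra.
Qed.

Lemma potential_zero_unique x y : D x -> D y -> G x = 0 -> G y = 0 -> x = y.
Proof.
  intros Dx Dy Gx Gy.
  destruct (Rtotal_order x y) as [xy|[xy|yx]]; auto.
  - pose proof (G_increasing x y Dx Dy xy); lra.
  - pose proof (G_increasing y x Dy Dx yx); lra.
Qed.

Lemma potential_strict_minimizer z x : D z -> G z = 0 -> D x -> x <> z -> J z < J x.
Proof.
  intros Dz Gz Dx xz.
  destruct (Rtotal_order z x) as [zx|[zx|xz']]; [| congruence |].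
  - destruct (potential_mean_value z x Dz Dx zx) as [c [Dc [Hc E]]].
    pose proof (G_increasing z c Dz Dc (proj1 Hc)).
    assert (0 < G c * (x - z)) by (apply Rmult_lt_0_compat; lra). lra.
  - destruct (potential_mean_value x z Dx Dz xz') as [c [Dc [Hc E]]].
    pose proof (G_increasing c z Dc Dz (proj2 Hc)).
    assert (0 < - G c * (z - x)) by (apply Rmult_lt_0_compat; lra). lra.
Qed.

Lemma potential_strictly_convex : strictly_convex_on D J.
Proof.
  (* Ordered case: the chord slopes on [x,z] and [z,y] are G-values at points
     c1 < z < c2, hence compare strictly. *)
  assert (ordered : forall x y t, D x -> D y -> x < y -> 0 < t < 1 ->
            J (t * x + (1 - t) * y) < t * J x + (1 - t) * J y).
  { intros x y t Dx Dy xy Ht.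
    set (z := t * x + (1 - t) * y).
    assert (xz : x < z) by (unfold z; nra). assert (zy : z < y) by (unfold z; nra).
    assert (Dz : D z) by (apply (D_interval x y); auto; lra).
    destruct (potential_mean_value x z Dx Dz xz) as [c1 [Dc1 [Hc1 E1]]].
    destruct (potential_mean_value z y Dz Dy zy) as [c2 [Dc2 [Hc2 E2]]].
    pose proof (G_increasing c1 c2 Dc1 Dc2 ltac:(lra)) as Gc.
    replace (z - x) with ((1 - t) * (y - x)) in E1 by (unfold z; ring).
    replace (y - z) with (t * (y - x)) in E2 by (unfold z; ring).
    assert (0 < t * (1 - t) * (y - x) * (G c2 - G c1)).
    { repeat apply Rmult_lt_0_compat; lra. }
    nra. }
  intros x y t Dx Dy xy Ht.
  destruct (Rtotal_order x y) as [h|[h|h]]; [auto | congruence |].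
  replace (t * x + (1 - t) * y) with ((1 - t) * y + (1 - (1 - t)) * x) by ring.
  replace (t * J x + (1 - t) * J y) with ((1 - t) * J y + (1 - (1 - t)) * J x) by ring.
  apply ordered; auto; lra.
Qed.

Hypothesis G_continuous : forall x, D x -> continuous G x.

Lemma potential_zero_exists :
  (exists x, D x /\ G x < 0) -> (exists y, D y /\ 0 < G y) -> exists z, D z /\ G z = 0.
Proof.
  intros [x [Dx Gx]] [y [Dy Gy]].
  assert (xy : x < y).
  { destruct (Rlt_or_le x y) as [h|h]; auto.
    destruct (Req_dec x y) as [->|ne]; [lra|].
    pose proof (G_increasing y x Dy Dx ltac:(lra)); lra. }
  destruct (Ranalysis5.IVT_interv G x y) as [z [Hz Gz]]; auto.
  - intros c Hc. apply continuity_pt_filterlim, G_continuous, (D_interval x y); auto.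
  - exists z. split; auto. apply (D_interval x y); auto.
Qed.

End ConvexPotential.

Lemma convex_potential_minimizer (D Z : R -> Prop) (J G : R -> R) :
  interval D ->
  (forall x, Z x <-> D x /\ G x = 0) ->
  (forall x, D x -> is_derive J x (G x)) ->
  (forall x, D x -> continuous G x) ->
  (forall x y, D x -> D y -> x < y -> G x < G y) ->
  (exists x, D x /\ G x < 0) -> (exists y, D y /\ 0 < G y) ->
  (exists z, Z z /\ (forall z', Z z' -> z' = z) /\ D z
             /\ (forall x, D x -> x <> z -> J z < J x))
  /\ strictly_convex_on D J.
Proof.
  intros HD HZ HJ HGc HGm Hneg Hpos.
  split; [| exact (potential_strictly_convex D J G HD HJ HGm)].
  destruct (potential_zero_exists D G HD HGm HGc Hneg Hpos) as [z [Dz Gz]].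
  exists z. split; [apply HZ; auto|]. split; [|split; auto].
  - intros z' Hz'. apply HZ in Hz' as [Dz' Gz'].
    apply (potential_zero_unique D G HGm); auto.
  - intros x Dx xz. apply (potential_strict_minimizer D J G); auto.
Qed.

(* Chord slopes, and the difference quotient based at q extended at q by the
   derivative; phi(., q) is an instance of the latter for F. *)
Definition slope (f : R -> R) (x y : R) : R := (f y - f x) / (y - x).

Definition secant (f f' : R -> R) (q s : R) : R :=
  if Req_EM_T s q then f' s else slope f q s.

Lemma slope_sym f x y : x <> y -> slope f x y = slope f y x.
Proof. intros. unfold slope. field. lra. Qed.

(* The slope over [x, y] is a weighted mean of the slopes over [x, z], [z, y]. *)
Lemma slope_mediant f x z y : x < z < y -> slope f x z < slope f z y ->
  slope f x z < slope f x y /\ slope f x y < slope f z y.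
Proof.
  intros Hz Hlt. unfold slope in *.
  set (p := (f z - f x) / (z - x)) in *. set (q := (f y - f z) / (y - z)) in *.
  assert (Ep : f z - f x = p * (z - x)) by (unfold p; field; lra).
  assert (Eq : f y - f z = q * (y - z)) by (unfold q; field; lra).
  clearbody p q.
  replace (f y - f x) with (p * (z - x) + q * (y - z)) by lra.
  assert (0 < (q - p) * (z - x)) by (apply Rmult_lt_0_compat; lra).
  assert (0 < (q - p) * (y - z)) by (apply Rmult_lt_0_compat; lra).
  split; [apply Rlt_div_r | apply Rlt_div_l]; lra.
Qed.

Section Secant.

Variables (I : R -> Prop) (f f' : R -> R) (q : R).
Hypothesis I_interval : interval I.
Hypothesis I_q : I q.
Hypothesis f_derive : forall x, I x -> is_derive f x (f' x).
Hypothesis f'_increasing : forall x y, I x -> I y -> x < y -> f' x < f' y.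

Lemma slope_mean_value x y : I x -> I y -> x < y -> exists c, I c /\ x < c < y /\ slope f x y = f' c.
Proof.
  intros Ix Iy xy.
  destruct (MVT_cor2 f f' x y xy) as [c [E Hc]].
  - intros c Hc. apply is_derive_Reals, f_derive, (I_interval x y); auto.
  - exists c. repeat split; try lra.
    + apply (I_interval x y); auto; lra.
    + unfold slope. rewrite E. field. lra.
Qed.

Lemma slope_lt_derivative x z : I x -> I z -> x < z -> slope f x z < f' z.
Proof.
  intros Ix Iz xz. destruct (slope_mean_value x z Ix Iz xz) as [c [Ic [Hc ->]]].
  apply f'_increasing; auto; lra.
Qed.

Lemma derivative_lt_slope z y : I z -> I y -> z < y -> f' z < slope f z y.
Proof.
  intros Iz Iy zy. destruct (slope_mean_value z y Iz Iy zy) as [c [Ic [Hc ->]]].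
  apply f'_increasing; auto; lra.
Qed.

Lemma three_chord x z y : I x -> I y -> x < z < y ->
  slope f x z < slope f x y /\ slope f x y < slope f z y.
Proof.
  intros Ix Iy Hz. apply slope_mediant; auto.
  assert (Iz : I z) by (apply (I_interval x y); auto; lra).
  pose proof (slope_lt_derivative x z Ix Iz (proj1 Hz)).
  pose proof (derivative_lt_slope z y Iz Iy (proj2 Hz)). lra.
Qed.

Lemma secant_off s : s <> q -> secant f f' q s = slope f q s.
Proof. intros. unfold secant. destruct (Req_EM_T s q); [congruence | reflexivity]. Qed.

Lemma secant_at : secant f f' q q = f' q.
Proof. unfold secant. destruct (Req_EM_T q q); [reflexivity | congruence]. Qed.

Lemma secant_increasing x y : I x -> I y -> x < y -> secant f f' q x < secant f f' q y.
Proof.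
  intros Ix Iy xy.
  destruct (Rtotal_order x q) as [xq|[xq|xq]]; [destruct (Rtotal_order y q) as [yq|[yq|yq]] | |].
  - rewrite !secant_off, !(slope_sym f q) by lra. apply (three_chord x y q); auto; lra.
  - subst y. rewrite secant_off, secant_at, slope_sym by lra.
    apply slope_lt_derivative; auto.
  - rewrite !secant_off, (slope_sym f q x) by lra.
    pose proof (slope_lt_derivative x q Ix I_q xq).
    pose proof (derivative_lt_slope q y I_q Iy yq). lra.
  - subst x. rewrite secant_at, secant_off by lra. apply derivative_lt_slope; auto.
  - rewrite !secant_off by lra. apply (three_chord q x y); auto; lra.
Qed.

(* Away from q the secant is a quotient of differentiable functions; at q it
   tends to f' q by the definition of the derivative. *)
Lemma secant_continuous s : I s -> continuous (secant f f' q) s.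
Proof.
  intros Is. destruct (Req_dec s q) as [->|sq].
  - apply continuity_pt_filterlim. intros eps Heps.
    destruct (proj1 (is_derive_Reals f q (f' q)) (f_derive q I_q) eps Heps) as [del Hdel].
    exists del. split; [apply cond_pos|].
    intros x [[_ Hxq] Hx]. simpl in *. unfold R_dist in *.
    rewrite secant_at, secant_off by auto. unfold slope.
    replace x with (q + (x - q)) at 1 by ring.
    apply Hdel; lra.
  - apply (continuous_ext_loc (secant f f' q) (slope f q) s).
    + assert (Hd : 0 < Rabs (s - q)) by (apply Rabs_pos_lt; lra).
      exists (mkposreal _ Hd). intros y Hy. symmetry. apply secant_off.
      intros ->. revert Hy. unfold ball; simpl; unfold AbsRing_ball, abs, minus, plus, opp; simpl.
      rewrite <- Rabs_Ropp. replace (- (q + - s)) with (s - q) by ring. lra.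
    + apply (@ex_derive_continuous R_AbsRing R_NormedModule). unfold slope. auto_derive.
      repeat split; [exists (f' s); apply f_derive; auto | lra].
Qed.

End Secant.

Lemma sum_from_scaled_diff m k (s a b : nat -> R) :
  sum_from m k (fun i => s i * (a i - b i))
  = sum_from m k (fun i => s i * a i) - sum_from m k (fun i => s i * b i).
Proof. revert m; induction k as [|k IH]; intros m; simpl; [ring | rewrite IH; ring]. Qed.

Lemma sum_from_nonneg m k f : (forall i, (m <= i < m + k)%nat -> 0 <= f i) ->
  0 <= sum_from m k f.
Proof.
  revert m; induction k as [|k IH]; intros m Hf; simpl; [lra|].
  pose proof (Hf m ltac:(lia)). pose proof (IH (S m) ltac:(intros; apply Hf; lia)). lra.
Qed.

Lemma sum_from_pos m k f : (0 < k)%nat -> (forall i, (m <= i < m + k)%nat -> 0 < f i) ->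
  0 < sum_from m k f.
Proof.
  destruct k as [|k]; intros Hk Hf; [lia|]. simpl.
  pose proof (Hf m ltac:(lia)).
  pose proof (sum_from_nonneg (S m) k f ltac:(intros; apply Rlt_le, Hf; lia)). lra.
Qed.

Lemma sum_from_ge_term m k f j : (forall i, (m <= i < m + k)%nat -> 0 <= f i) ->
  (m <= j < m + k)%nat -> f j <= sum_from m k f.
Proof.
  revert m; induction k as [|k IH]; intros m Hf Hj; [lia|]. simpl.
  pose proof (Hf m ltac:(lia)).
  destruct (Nat.eq_dec j m) as [->|ne].
  - pose proof (sum_from_nonneg (S m) k f ltac:(intros; apply Hf; lia)). lra.
  - pose proof (IH (S m) ltac:(intros; apply Hf; lia) ltac:(lia)). lra.
Qed.

Lemma sum_from_derive m k (f f' : R -> nat -> R) x :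
  (forall i, (m <= i < m + k)%nat -> is_derive (fun y => f y i) x (f' x i)) ->
  is_derive (fun y => sum_from m k (f y)) x (sum_from m k (f' x)).
Proof.
  revert m; induction k as [|k IH]; intros m Hterm; simpl.
  - apply (is_derive_const (K:=R_AbsRing) (V:=R_NormedModule)).
  - apply (is_derive_plus (K:=R_AbsRing) (V:=R_NormedModule)
             (fun y => f y m) (fun y => sum_from (S m) k (f y))).
    + apply Hterm; lia.
    + apply IH. intros; apply Hterm; lia.
Qed.

Lemma prod_from_pos m k f : (forall i, 0 < f i) -> 0 < prod_from m k f.
Proof.
  revert m; induction k as [|k IH]; intros m Hf; simpl; [lra|].
  apply Rmult_lt_0_compat; auto.
Qed.

Lemma argmin m k (h : nat -> R) : (0 < k)%nat ->
  exists j, (m <= j < m + k)%nat /\ forall i, (m <= i < m + k)%nat -> h j <= h i.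
Proof.
  revert m; induction k as [|k IH]; intros m Hk; [lia|].
  destruct k as [|k].
  - exists m. split; [lia|]. intros i Hi. replace i with m by lia. lra.
  - destruct (IH (S m) ltac:(lia)) as [j [Hj Hmin]].
    destruct (Rle_or_lt (h m) (h j)) as [hm|hj].
    + exists m. split; [lia|]. intros i Hi.
      destruct (Nat.eq_dec i m) as [->|ne]; [lra|]. pose proof (Hmin i ltac:(lia)). lra.
    + exists j. split; [lia|]. intros i Hi.
      destruct (Nat.eq_dec i m) as [->|ne]; [lra | apply Hmin; lia].
Qed.

Lemma locally_forall_lt (x : R) (n : nat) (P : nat -> R -> Prop) :
  (forall i, (i < n)%nat -> locally x (P i)) ->
  locally x (fun y => forall i, (i < n)%nat -> P i y).
Proof.
  induction n as [|n IH]; intros Hloc.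
  - apply filter_forall. intros y i Hi. lia.
  - apply (filter_imp (fun y => (forall i, (i < n)%nat -> P i y) /\ P n y)).
    + intros y [Hy Hn] i Hi. destruct (Nat.eq_dec i n) as [->|ne]; auto. apply Hy; lia.
    + apply filter_and; [apply IH; intros; apply Hloc; lia | apply Hloc; lia].
Qed.

Lemma affine_pos_locally (a s x : R) : 0 < a + s * x -> locally x (fun y => 0 < a + s * y).
Proof.
  intros Hx.
  assert (Hd : 0 < (a + s * x) / (Rabs s + 1)).
  { apply Rdiv_lt_0_compat; [lra|]. pose proof (Rabs_pos s); lra. }
  exists (mkposreal _ Hd). intros y Hy. simpl in Hy.
  change (Rabs (y - x) < (a + s * x) / (Rabs s + 1)) in Hy.
  pose proof (Rabs_pos s). pose proof (Rabs_pos (y - x)).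
  assert (Hb : Rabs s * Rabs (y - x) < a + s * x).
  { apply Rlt_div_r in Hy; [|lra]. nra. }
  rewrite <- Rabs_mult in Hb.
  pose proof (Rle_abs (- (s * (y - x)))) as Hle. rewrite Rabs_Ropp in Hle. nra.
Qed.

Definition positive_conc (N : nat) (c0 sigma : nat -> R) (x : R) : Prop :=
  forall i, (i < N)%nat -> 0 < conc c0 sigma x i.

(* Each c_i is affine in the extent, so the feasible extents form an open
   interval. *)
Lemma positive_conc_interval N c0 sigma : interval (positive_conc N c0 sigma).
Proof.
  intros x y z Hx Hy Hz i Hi. specialize (Hx i Hi). specialize (Hy i Hi).
  unfold conc in *. destruct (Rle_or_lt 0 (sigma i)); nra.
Qed.

Lemma positive_conc_locally N c0 sigma x :
  positive_conc N c0 sigma x -> locally x (positive_conc N c0 sigma).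
Proof.
  intros Hx. apply locally_forall_lt. intros i Hi. apply affine_pos_locally, Hx, Hi.
Qed.

Lemma Fen_derive N c0 sigma U x : positive_conc N c0 sigma x ->
  is_derive (Fen N c0 sigma U) x (dFen N c0 sigma U x).
Proof.
  intros Hx. unfold Fen, dFen, sumN.
  apply (sum_from_derive 0 N
     (fun y i => conc c0 sigma y i * (ln (conc c0 sigma y i) - 1) + conc c0 sigma y i * U i)
     (fun y i => sigma i * chem c0 sigma U y i)).
  intros i Hi. specialize (Hx i ltac:(lia)). unfold conc, chem in *.
  auto_derive; [lra|]. unfold conc. field. lra.
Qed.

Lemma dFen_ex_derive N c0 sigma U x : positive_conc N c0 sigma x ->
  ex_derive (dFen N c0 sigma U) x.
Proof.
  intros Hx. unfold dFen, sumN. eexists.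
  apply (sum_from_derive 0 N (fun y i => sigma i * chem c0 sigma U y i)
     (fun y i => sigma i * (sigma i / conc c0 sigma y i))).
  intros i Hi. specialize (Hx i ltac:(lia)). unfold chem, conc in *.
  auto_derive; [lra|]. field. lra.
Qed.

Lemma phi_diag N c0 sigma U q : phi N c0 sigma U q q = dFen N c0 sigma U q.
Proof. unfold phi. destruct (Req_EM_T q q); [reflexivity | congruence]. Qed.

Lemma dFen_increment N c0 sigma U x y :
  dFen N c0 sigma U y - dFen N c0 sigma U x
  = sumN N (fun i => sigma i * (chem c0 sigma U y i - chem c0 sigma U x i)).
Proof. unfold dFen, sumN. rewrite sum_from_scaled_diff. reflexivity. Qed.

(* sigma_i mu_i is strictly increasing along the reaction: c_i moves in the
   direction of sigma_i and ln is increasing. *)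
Lemma chem_increment_pos c0 sigma U i x y : sigma i <> 0 -> x < y ->
  0 < conc c0 sigma x i -> 0 < conc c0 sigma y i ->
  0 < sigma i * (chem c0 sigma U y i - chem c0 sigma U x i).
Proof.
  intros Hs xy Hx Hy. unfold chem. unfold conc in *.
  destruct (Rlt_or_le 0 (sigma i)).
  - assert (ln (c0 i + sigma i * x) < ln (c0 i + sigma i * y)) by (apply ln_increasing; nra).
    nra.
  - assert (ln (c0 i + sigma i * y) < ln (c0 i + sigma i * x)) by (apply ln_increasing; nra).
    nra.
Qed.

(* With every sigma_i nonzero, all increments of sigma_i mu_i have the same sign
   as the increment of the extent, so F' is strictly increasing and its
   increment dominates that of each single species. *)
Section FreeEnergyIncrement.

Variables (N : nat) (c0 sigma U : nat -> R).
Hypothesis sigma_nonzero : forall i, (i < N)%nat -> sigma i <> 0.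

Lemma dFen_increment_ge_term x y j : x < y ->
  positive_conc N c0 sigma x -> positive_conc N c0 sigma y -> (j < N)%nat ->
  sigma j * (chem c0 sigma U y j - chem c0 sigma U x j)
  <= dFen N c0 sigma U y - dFen N c0 sigma U x.
Proof.
  intros xy Hx Hy Hj. rewrite dFen_increment. unfold sumN.
  apply (sum_from_ge_term 0 N (fun i => sigma i * (chem c0 sigma U y i - chem c0 sigma U x i)));
    [|lia].
  intros i Hi. apply Rlt_le, chem_increment_pos; [apply sigma_nonzero | | apply Hx | apply Hy]; lia || lra.
Qed.

Lemma dFen_increasing x y : (0 < N)%nat -> x < y ->
  positive_conc N c0 sigma x -> positive_conc N c0 sigma y ->
  dFen N c0 sigma U x < dFen N c0 sigma U y.
Proof.
  intros HN xy Hx Hy.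
  assert (0 < dFen N c0 sigma U y - dFen N c0 sigma U x); [|lra].
  rewrite dFen_increment. apply sum_from_pos; auto.
  intros i Hi. apply chem_increment_pos; [apply sigma_nonzero | | apply Hx | apply Hy]; lia || lra.
Qed.

End FreeEnergyIncrement.

Lemma species_shift c0 sigma U i M : sigma i <> 0 -> 0 < c0 i ->
  let x := c0 i * (exp (M / sigma i) - 1) / sigma i in
  conc c0 sigma x i = c0 i * exp (M / sigma i)
  /\ sigma i * (chem c0 sigma U x i - chem c0 sigma U 0 i) = M.
Proof.
  intros Hs Hc x.
  assert (Hx : conc c0 sigma x i = c0 i * exp (M / sigma i)) by (unfold x, conc; field; auto).
  split; auto.
  unfold chem. rewrite Hx. replace (conc c0 sigma 0 i) with (c0 i) by (unfold conc; ring).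
  rewrite ln_mult, ln_exp by (auto; apply exp_pos). field; auto.
Qed.

Lemma mobility_pos N r k1m beta c : 0 < k1m -> 0 < mobility N r k1m beta c.
Proof.
  intros Hk. unfold mobility. apply Rmult_lt_0_compat; auto.
  apply prod_from_pos. intros; apply exp_pos.
Qed.

Definition scheme_domain (N : nat) (c0 sigma : nat -> R) (E Rn x : R) : Prop :=
  positive_conc N c0 sigma x /\ x - Rn + E > 0.

Definition log_term (E Rn x : R) : R := ln ((x - Rn) / E + 1).

Definition scheme_residual (N : nat) (c0 sigma U : nat -> R) (E dt Rn x : R) : R :=
  log_term E Rn x + phi N c0 sigma U x Rn
  + dt * (dFen N c0 sigma U x - dFen N c0 sigma U Rn).

Definition scheme_energy (N : nat) (c0 sigma U : nat -> R) (E dt Rn x : R) : R :=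
  (x - Rn + E) * log_term E Rn x - (x - Rn) + RInt (fun s => phi N c0 sigma U s Rn) Rn x
  + dt * Fen N c0 sigma U x - dt * dFen N c0 sigma U Rn * x.

Section LogTerm.

Variables (E Rn : R).
Hypothesis E_pos : 0 < E.

Lemma log_term_arg_pos x : x - Rn + E > 0 -> 0 < (x - Rn) / E + 1.
Proof.
  intros Hx. replace ((x - Rn) / E + 1) with ((x - Rn + E) / E) by (field; lra).
  apply Rdiv_lt_0_compat; lra.
Qed.

Lemma log_term_zero : log_term E Rn Rn = 0.
Proof. unfold log_term. replace ((Rn - Rn) / E + 1) with 1 by (field; lra). apply ln_1. Qed.

Lemma log_term_increasing x y : x - Rn + E > 0 -> x < y -> log_term E Rn x < log_term E Rn y.
Proof.
  intros Hx xy. unfold log_term. apply ln_increasing; [apply log_term_arg_pos; auto|].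
  apply Rplus_lt_compat_r, Rmult_lt_compat_r; [apply Rinv_0_lt_compat|]; lra.
Qed.

Lemma log_term_exp K : log_term E Rn (Rn + E * (exp (- K) - 1)) = - K.
Proof.
  unfold log_term.
  replace ((Rn + E * (exp (- K) - 1) - Rn) / E + 1) with (exp (- K)) by (field; lra).
  apply ln_exp.
Qed.

Lemma log_term_continuous x : x - Rn + E > 0 -> continuous (log_term E Rn) x.
Proof.
  intros Hx. pose proof (log_term_arg_pos x Hx).
  apply (@ex_derive_continuous R_AbsRing R_NormedModule). unfold log_term. auto_derive.
  replace ((x + - Rn) * / E + 1) with ((x - Rn) / E + 1) by (unfold Rdiv, Rminus; ring). lra.
Qed.

End LogTerm.

Section Reaction.

Variables (N r : nat) (alpha beta U c0 : nat -> R).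
Hypothesis reactants_exist : (1 <= r)%nat.
Hypothesis products_exist : (r < N)%nat.
Hypothesis alpha_pos : forall i, (i < r)%nat -> 0 < alpha i.
Hypothesis beta_pos : forall i, (r <= i < N)%nat -> 0 < beta i.
Hypothesis c0_pos : forall i, (i < N)%nat -> 0 < c0 i.

Local Notation sigma := (stoich r alpha beta).
Local Notation dF := (dFen N c0 sigma U).

Lemma stoich_reactant i : (i < r)%nat -> sigma i = - alpha i.
Proof. intros Hi. unfold stoich. destruct (Nat.ltb_spec i r); [reflexivity | lia]. Qed.

Lemma stoich_product i : (r <= i)%nat -> sigma i = beta i.
Proof. intros Hi. unfold stoich. destruct (Nat.ltb_spec i r); [lia | reflexivity]. Qed.

Lemma stoich_nonzero i : (i < N)%nat -> sigma i <> 0.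
Proof.
  intros Hi. destruct (Nat.lt_ge_cases i r) as [h|h].
  - rewrite stoich_reactant by auto. specialize (alpha_pos i h). lra.
  - rewrite stoich_product by auto. specialize (beta_pos i ltac:(lia)). lra.
Qed.

Lemma positive_conc_initial : positive_conc N c0 sigma 0.
Proof. intros i Hi. unfold conc. rewrite Rmult_0_r, Rplus_0_r. auto. Qed.

(* Driving the most limiting reactant j towards depletion makes F' blow up. *)
Lemma dFen_unbounded_above M :
  exists x, 0 < x /\ positive_conc N c0 sigma x /\ M <= dF x - dF 0.
Proof.
  destruct (argmin 0 r (fun i => c0 i / alpha i) ltac:(lia)) as [j [Hj Hmin]].
  simpl in Hj, Hmin.
  pose proof (alpha_pos j ltac:(lia)) as Haj. pose proof (c0_pos j ltac:(lia)) as Hcj.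
  set (M' := Rmax M 1).
  assert (HM : M <= M') by apply Rmax_l. assert (HM' : 1 <= M') by apply Rmax_r.
  destruct (species_shift c0 sigma U j M' (stoich_nonzero j ltac:(lia)) Hcj)
    as [Hconc Hshift].
  set (x := c0 j * (exp (M' / sigma j) - 1) / sigma j) in *. clearbody x.
  unfold conc in Hconc. rewrite stoich_reactant in Hconc by lia.
  assert (Hexp : exp (M' / - alpha j) < 1).
  { rewrite <- exp_0. apply exp_increasing.
    assert (0 < M' / alpha j) by (apply Rdiv_lt_0_compat; lra).
    replace (M' / - alpha j) with (- (M' / alpha j)) by (field; lra). lra. }
  pose proof (exp_pos (M' / - alpha j)).
  assert (Hx : 0 < x) by nra. assert (Hxj : x * alpha j < c0 j) by nra.
  assert (Hpos : positive_conc N c0 sigma x).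
  { intros i Hi. unfold conc. destruct (Nat.lt_ge_cases i r) as [h|h].
    - rewrite stoich_reactant by auto. specialize (Hmin i ltac:(lia)).
      pose proof (alpha_pos i h).
      assert (x * alpha i < c0 i); [|lra].
      apply Rlt_div_r; [lra|]. apply Rlt_div_r in Hxj; lra.
    - rewrite stoich_product by auto.
      pose proof (beta_pos i ltac:(lia)). pose proof (c0_pos i Hi). nra. }
  exists x. split; [lra|]. split; [auto|].
  pose proof (dFen_increment_ge_term N c0 sigma U stoich_nonzero 0 x j ltac:(lra)
                positive_conc_initial Hpos ltac:(lia)).
  lra.
Qed.

(* Symmetrically, depleting the most limiting product k makes F' tend to -oo. *)
Lemma dFen_unbounded_below M :
  exists x, x < 0 /\ positive_conc N c0 sigma x /\ dF x - dF 0 <= - M.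
Proof.
  destruct (argmin r (N - r) (fun i => c0 i / beta i) ltac:(lia)) as [k [Hk Hmin]].
  replace (r + (N - r))%nat with N in Hk, Hmin by lia.
  pose proof (beta_pos k Hk) as Hbk. pose proof (c0_pos k ltac:(lia)) as Hck.
  set (M' := Rmax M 1).
  assert (HM : M <= M') by apply Rmax_l. assert (HM' : 1 <= M') by apply Rmax_r.
  destruct (species_shift c0 sigma U k (- M') (stoich_nonzero k ltac:(lia)) Hck)
    as [Hconc Hshift].
  set (x := c0 k * (exp (- M' / sigma k) - 1) / sigma k) in *. clearbody x.
  unfold conc in Hconc. rewrite stoich_product in Hconc by lia.
  assert (Hexp : exp (- M' / beta k) < 1).
  { rewrite <- exp_0. apply exp_increasing.
    assert (0 < M' / beta k) by (apply Rdiv_lt_0_compat; lra).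
    replace (- M' / beta k) with (- (M' / beta k)) by (field; lra). lra. }
  pose proof (exp_pos (- M' / beta k)).
  assert (Hx : x < 0) by nra. assert (Hxk : - x * beta k < c0 k) by nra.
  assert (Hpos : positive_conc N c0 sigma x).
  { intros i Hi. unfold conc. destruct (Nat.lt_ge_cases i r) as [h|h].
    - rewrite stoich_reactant by auto.
      pose proof (alpha_pos i h). pose proof (c0_pos i Hi). nra.
    - rewrite stoich_product by auto. specialize (Hmin i ltac:(lia)).
      pose proof (beta_pos i ltac:(lia)).
      assert (- x * beta i < c0 i); [|lra].
      apply Rlt_div_r; [lra|]. apply Rlt_div_r in Hxk; lra. }
  exists x. split; [lra|]. split; [auto|].
  pose proof (dFen_increment_ge_term N c0 sigma U stoich_nonzero x 0 k ltac:(lra)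
                Hpos positive_conc_initial ltac:(lia)).
  lra.
Qed.

Variables (dt E : R).
Hypothesis dt_pos : 0 < dt.
Hypothesis E_pos : 0 < E.

Local Notation D := (scheme_domain N c0 sigma E 0).
Local Notation G := (scheme_residual N c0 sigma U E dt 0).

Lemma scheme_domain_interval : interval D.
Proof.
  intros x y z [Hx Ex] [Hy Ey] Hz. split; [|lra].
  apply (positive_conc_interval N c0 sigma x y z); auto.
Qed.

(* phi(., 0) is the difference quotient of F based at 0, and F' is increasing. *)
Lemma phi_increasing x y : positive_conc N c0 sigma x -> positive_conc N c0 sigma y -> x < y ->
  phi N c0 sigma U x 0 < phi N c0 sigma U y 0.
Proof.
  apply (secant_increasing (positive_conc N c0 sigma) (Fen N c0 sigma U) dF 0).
  - apply positive_conc_interval.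
  - apply positive_conc_initial.
  - intros; apply Fen_derive; auto.
  - intros; apply dFen_increasing; auto; [apply stoich_nonzero | lia].
Qed.

(* phi(., 0) is continuous, which makes its integral in J_n differentiable. *)
Lemma phi_continuous x : positive_conc N c0 sigma x -> continuous (fun s => phi N c0 sigma U s 0) x.
Proof.
  apply (secant_continuous (positive_conc N c0 sigma) (Fen N c0 sigma U) dF 0).
  - apply positive_conc_initial.
  - intros; apply Fen_derive; auto.
Qed.

(* All three terms of the residual are strictly increasing. *)
Lemma residual_increasing x y : D x -> D y -> x < y -> G x < G y.
Proof.
  intros [Hx Ex] [Hy Ey] xy. unfold scheme_residual.
  pose proof (log_term_increasing E 0 E_pos x y Ex xy) as HL.
  pose proof (phi_increasing x y Hx Hy xy) as HS.
  pose proof (dFen_increasing N c0 sigma U stoich_nonzero x y ltac:(lia) xy Hx Hy) as HF.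
  pose proof (Rmult_lt_compat_l dt _ _ dt_pos HF). lra.
Qed.

Lemma residual_continuous x : D x -> continuous G x.
Proof.
  intros [Hx Ex].
  apply (continuous_ext (fun y => plus (phi N c0 sigma U y 0)
           (plus (log_term E 0 y) (dt * (dF y - dF 0))))).
  { intros y. unfold scheme_residual, plus; simpl. ring. }
  apply (@continuous_plus R_UniformSpace R_AbsRing R_NormedModule);
    [apply phi_continuous; auto|].
  apply (@continuous_plus R_UniformSpace R_AbsRing R_NormedModule);
    [apply log_term_continuous; auto|].
  apply (@ex_derive_continuous R_AbsRing R_NormedModule).
  auto_derive. apply dFen_ex_derive; auto.
Qed.

(* J_n' = G on D: the entropy part differentiates to the logarithmic term, the
   integral to phi(., 0) (fundamental theorem of calculus), F to F'. *)
Lemma energy_derivative x : D x -> is_derive (scheme_energy N c0 sigma U E dt 0) x (G x).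
Proof.
  intros [Hx Ex]. pose proof (log_term_arg_pos E 0 E_pos x Ex) as Harg.
  assert (Hseg : forall z, Rmin 0 x <= z <= Rmax 0 x -> positive_conc N c0 sigma z).
  { intros z Hz. destruct (Rle_or_lt 0 x).
    - rewrite Rmin_left, Rmax_right in Hz by lra.
      apply (positive_conc_interval N c0 sigma 0 x); auto using positive_conc_initial.
    - rewrite Rmin_right, Rmax_left in Hz by lra.
      apply (positive_conc_interval N c0 sigma x 0); auto using positive_conc_initial. }
  unfold scheme_energy, scheme_residual, log_term. auto_derive.
  - repeat split.
    + replace ((x + - 0) * / E + 1) with ((x - 0) / E + 1) by (unfold Rdiv, Rminus; ring). lra.
    + apply (ex_RInt_continuous (V := R_CompleteNormedModule)).
      intros z Hz. apply phi_continuous, Hseg, Hz.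
    + apply (filter_imp (positive_conc N c0 sigma));
        [intros; apply continuity_pt_filterlim, phi_continuous; auto|].
      apply positive_conc_locally, Hx.
    + exists (dF x). apply Fen_derive, Hx.
  - replace (Derive (fun y => Fen N c0 sigma U y) x) with (dF x)
      by (symmetry; apply is_derive_unique, Fen_derive, Hx).
    replace ((x + - 0) * / E + 1) with ((x - 0) / E + 1) by (unfold Rdiv, Rminus; ring).
    field. lra.
Qed.

(* Past the most limiting reactant the residual is positive ... *)
Lemma residual_positive : exists x, D x /\ 0 < G x.
Proof.
  destruct (dFen_unbounded_above (Rabs (dF 0) / dt)) as [x [Hx0 [Hx HM]]].
  assert (Dx : D x) by (split; auto; lra).
  exists x. split; auto.
  pose proof (log_term_increasing E 0 E_pos 0 x ltac:(lra) Hx0) as HL.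
  pose proof (phi_increasing 0 x positive_conc_initial Hx Hx0) as HS.
  rewrite log_term_zero in HL by auto.
  rewrite phi_diag in HS.
  assert (Rabs (dF 0) <= dt * (dF x - dF 0)).
  { replace (Rabs (dF 0)) with (dt * (Rabs (dF 0) / dt)) by (field; lra).
    apply Rmult_le_compat_l; lra. }
  pose proof (Rle_abs (- dF 0)). rewrite Rabs_Ropp in *.
  unfold scheme_residual. lra.
Qed.

(* ... and near the most limiting product, or near the singularity R = -E of
   the logarithmic term, it is negative. *)
Lemma residual_negative : exists x, D x /\ G x < 0.
Proof.
  set (d := dF 0).
  destruct (dFen_unbounded_below (Rabs d / dt)) as [xa [Hxa0 [Hxa HMa]]].
  set (xb := 0 + E * (exp (- (Rabs d + 1)) - 1)).
  assert (Hexp : exp (- (Rabs d + 1)) < 1).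
  { rewrite <- exp_0 at 2. apply exp_increasing. pose proof (Rabs_pos d). lra. }
  pose proof (exp_pos (- (Rabs d + 1))).
  assert (Hxb : xb - 0 + E > 0 /\ xb < 0) by (unfold xb; split; nra).
  assert (Hd : Rabs d <= dt * - (dF xa - dF 0)).
  { replace (Rabs d) with (dt * (Rabs d / dt)) by (field; lra).
    apply Rmult_le_compat_l; lra. }
  pose proof (Rle_abs d).
  (* Whichever of xa, xb is closer to 0 lies in D and carries its own bound. *)
  assert (Hbound : forall x, D x -> x < 0 -> G x < log_term E 0 x + d
                                          /\ G x < d + dt * (dF x - dF 0)).
  { intros x [Hx Ex] x0. unfold scheme_residual.
    pose proof (log_term_increasing E 0 E_pos x 0 Ex x0) as HL.
    pose proof (phi_increasing x 0 Hx positive_conc_initial x0) as HS.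
    pose proof (dFen_increasing N c0 sigma U stoich_nonzero x 0 ltac:(lia) x0 Hx
                  positive_conc_initial) as HF.
    rewrite log_term_zero in HL by auto. rewrite phi_diag in HS. fold d in HS, HF |- *.
    pose proof (Rmult_lt_compat_l dt _ _ dt_pos HF). split; lra. }
  destruct (Rle_or_lt xb xa) as [hab|hab].
  - assert (Dxa : D xa) by (split; auto; lra).
    exists xa. split; auto. destruct (Hbound xa Dxa Hxa0). lra.
  - assert (Dxb : D xb).
    { split; [|lra]. apply (positive_conc_interval N c0 sigma xa 0);
        auto using positive_conc_initial; lra. }
    exists xb. split; auto. destruct (Hbound xb Dxb (proj2 Hxb)).
    unfold xb in *. rewrite log_term_exp in * by auto. lra.
Qed.

Lemma scheme_characterization x :
  (D x /\ ln ((x - 0) / E + 1)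
          = - (phi N c0 sigma U x 0
               + dt * sumN N (fun i => sigma i * (chem c0 sigma U x i - chem c0 sigma U 0 i))))
  <-> D x /\ G x = 0.
Proof.
  rewrite <- dFen_increment. unfold scheme_residual, log_term.
  split; intros [Dx Hx]; split; auto; lra.
Qed.

End Reaction.

Theorem theorem3p1
  (N r : nat) (alpha beta U c0 : nat -> R) (k1m dt Rn Rhat : R)
  (HN : (2 <= N)%nat) (Hr1 : (1 <= r)%nat) (HrN : (r < N)%nat)
  (Halpha : forall i, (i < r)%nat -> 0 < alpha i)
  (Hbeta : forall i, (r <= i < N)%nat -> 0 < beta i)
  (Hk : 0 < k1m) (Hdt : 0 < dt)
  (Hc0 : forall i, (i < N)%nat -> 0 < c0 i)
  (HRn : Rn = 0)
  (HRhat : forall i, (i < N)%nat -> 0 < conc c0 (stoich r alpha beta) Rhat i) :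
  let sigma := stoich r alpha beta in
  let c := conc c0 sigma in
  let F := Fen N c0 sigma U in
  let mu := chem c0 sigma U in
  let ph := phi N c0 sigma U in
  let Rhalf := (Rn + Rhat) / 2 in
  let etahat := mobility N r k1m beta (c Rhalf) in
  let gamma := dt * sumN N (fun i => sigma i * mu Rn i) in
  let D := fun R => (forall i, (i < N)%nat -> 0 < c R i) /\ R - Rn + etahat * dt > 0 in
  let scheme := fun R =>
    D R /\
    ln ((R - Rn) / (etahat * dt) + 1)
      = - (ph R Rn + dt * sumN N (fun i => sigma i * (mu R i - mu Rn i))) in
  let J := fun R =>
    (R - Rn + etahat * dt) * ln ((R - Rn) / (etahat * dt) + 1) - (R - Rn)
    + RInt (fun s => ph s Rn) Rn R + dt * F R - gamma * R in
  (exists R1, scheme R1 /\ (forall R', scheme R' -> R' = R1)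
              /\ D R1 /\ (forall R, D R -> R <> R1 -> J R1 < J R))
  /\ strictly_convex_on D J.
Proof.
  intros sigma c F mu ph Rhalf etahat gamma D scheme J. subst Rn.
  assert (HE : 0 < etahat * dt) by (apply Rmult_lt_0_compat; [apply mobility_pos|]; auto).
  apply (convex_potential_minimizer D scheme J
           (scheme_residual N c0 sigma U (etahat * dt) dt 0)).
  - exact (scheme_domain_interval N r alpha beta c0 (etahat * dt)).
  - exact (scheme_characterization N r alpha beta U c0 dt (etahat * dt)).
  - exact (energy_derivative N r alpha beta U c0 Hc0 dt (etahat * dt) HE).
  - exact (residual_continuous N r alpha beta U c0 Hc0 dt (etahat * dt) HE).
  - exact (residual_increasing N r alpha beta U c0 Hr1 HrN Halpha Hbeta Hc0 dt (etahat * dt) Hdt HE).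
  - exact (residual_negative N r alpha beta U c0 Hr1 HrN Halpha Hbeta Hc0 dt (etahat * dt) Hdt HE).
  - exact (residual_positive N r alpha beta U c0 Hr1 HrN Halpha Hbeta Hc0 dt (etahat * dt) Hdt HE).
Qed.
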